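(* Let $\mathbb{F}$ be an infinite field with $\operatorname{char}(\mathbb{F})\neq 2$, let $G$ be a group with a group involution $\ast$, extended $\mathbb{F}$-linearly to $\mathbb{F}G$. Suppose that $\mathbb{F}G$ is normal with respect to $\ast$. Then $g^2\in\zeta(G)$ for all $g\in G$.
   Context: A group involution on $G$ is a map $\ast:G\to G$ with $(gh)^\ast=h^\ast g^\ast$ and $(g^\ast)^\ast=g$ for all $g,h\in G$; it is extended $\mathbb{F}$-linearly to an algebra involution of $\mathbb{F}G$. The algebra $\mathbb{F}G$ is normal (with respect to $\ast$) if $\alpha\alpha^\ast=\alpha^\ast\alpha$ for all $\alpha\in\mathbb{F}G$. $\zeta(G)$ denotes the center of $G$. *)

From HB Require Import structures.
From mathcomp Require Import all_boot all_order all_algebra.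
Set Implicit Arguments. Unset Strict Implicit. Unset Printing Implicit Defensive.
Import GRing.Theory.

Definition group_involution (G : groupType) (s : G -> G) : Prop :=
  (forall g h : G, s (g * h)%g = (s h * s g)%g) /\ (forall g : G, s (s g) = g).

(* Elements of the group algebra F G are finite formal sums  sum_i a_i g_i ;
   we represent such a sum by the list of its terms (a_i, g_i).  Two lists
   represent the same element of F G iff they have the same coefficient at
   every x in G (this is how equality in F G is tested below). *)
Definition galg (F : fieldType) (G : groupType) := seq (F * G).

Definition galg_coef (F : fieldType) (G : groupType) (l : galg F G) (x : G) : F :=
  (\sum_(p <- l | p.2 == x) p.1)%R.

Definition galg_mul (F : fieldType) (G : groupType) (l1 l2 : galg F G) : galg F G :=
  [seq ((p.1 * q.1)%R, (p.2 * q.2)%g) | p <- l1, q <- l2].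

Definition galg_star (F : fieldType) (G : groupType) (s : G -> G) (l : galg F G)
  : galg F G := [seq (p.1, s p.2) | p <- l].

Definition galg_normal (F : fieldType) (G : groupType) (s : G -> G) : Prop :=
  forall (a : galg F G) (x : G),
    galg_coef (galg_mul a (galg_star s a)) x = galg_coef (galg_mul (galg_star s a) a) x.

Definition infinite_field (F : fieldType) : Prop :=
  forall s : seq F, exists x : F, x \notin s.

From mathcomp Require Import all_boot all_order all_algebra.
Set Implicit Arguments. Unset Strict Implicit. Unset Printing Implicit Defensive.
Import GRing.Theory.
Local Open Scope ring_scope.

(* Normality tested on alpha = x gives x x^* = x^* x.  Tested on alpha = x + y:
   if x y^* is neither x^* y nor y^* x then, once the equal terms x x^* = x^* x
   and y y^* = y^* y are cancelled, its coefficient is 1 or 2 in alpha alpha^*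
   but 0 in alpha^* alpha, impossible as char F <> 2.  Replacing y by y^*, every
   x, y satisfy x y = x^* y^* or x y = y x.  If g and h do not commute, this
   alternative applied to (g, h), (g, g h) and (h g, g) gives g h = g^* h^*, then
   g h = h g^*, and finally h g g = g g h. *)

Section UnitCoefficientSums.
Variables (F : fieldType) (G : groupType).
Implicit Types (xs ys : seq G) (x : G).

Definition galg_of_seq xs : galg F G := [seq (1, x) | x <- xs].

Lemma galg_coef_of_seq xs x : galg_coef (galg_of_seq xs) x = (count_mem x xs)%:R.
Proof.
rewrite /galg_coef big_map; elim: xs => [|y xs IHxs]; first by rewrite big_nil.
by rewrite big_cons /= IHxs eq_sym; case: eqP; rewrite ?add0n // natrD.
Qed.

Lemma galg_mul_of_seq xs ys :
  galg_mul (galg_of_seq xs) (galg_of_seq ys)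
  = galg_of_seq [seq (x * y)%g | x <- xs, y <- ys].
Proof.
rewrite /galg_mul /galg_of_seq allpairs_mapl allpairs_mapr map_allpairs.
by apply: eq_allpairs => x y; rewrite mulr1.
Qed.

Lemma galg_star_of_seq (s : G -> G) xs :
  galg_star s (galg_of_seq xs) = galg_of_seq (map s xs).
Proof. by rewrite /galg_star /galg_of_seq -!map_comp; apply: eq_map. Qed.

End UnitCoefficientSums.

Lemma natr_eq0_le2 (R : nzRingType) (k : nat) :
  2%:R != 0 :> R -> (k <= 2)%N -> (k%:R == 0 :> R) = (k == 0)%N.
Proof.
by case: k => [|[|[|]]] //= two_neq0 _; rewrite ?eqxx ?oner_eq0 ?(negPf two_neq0).
Qed.

Section NormalGroupAlgebra.
Variables (F : fieldType) (G : groupType) (s : G -> G).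
Hypothesis normalFG : galg_normal F s.

Lemma galg_normal_count xs c :
  (count_mem c [seq (x * y)%g | x <- xs, y <- map s xs])%:R
  = (count_mem c [seq (x * y)%g | x <- map s xs, y <- xs])%:R :> F.
Proof.
have := normalFG (galg_of_seq F xs) c.
by rewrite galg_star_of_seq !galg_mul_of_seq !galg_coef_of_seq.
Qed.

Lemma galg_normal_commute_star x : commute x (s x).
Proof.
have := galg_normal_count [:: x] (x * s x)%g; rewrite /= eqxx.
by case: eqP => // _ /eqP; rewrite oner_eq0.
Qed.

Hypothesis two_neq0 : 2%:R != 0 :> F.

Lemma galg_normal_mul_star x y :
  (x * s y = s x * y)%g \/ (x * s y = s y * x)%g.
Proof.
have := galg_normal_count [:: x; y] (x * s y)%g.
rewrite /= -!galg_normal_commute_star eqxx !addn0.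
have [|ne1] := eqVneq (s x * y)%g (x * s y)%g; first by left.
have [|ne2] := eqVneq (s y * x)%g (x * s y)%g; first by right.
rewrite !add0n addnCA [X in (1 + X)%N]addnCA addnA natrD -[X in _ = X]add0r.
move/addIr/eqP; rewrite natr_eq0_le2 // add1n ltnS.
by case: eqP.
Qed.

End NormalGroupAlgebra.

Section SquaresCentral.
Variables (G : groupType) (s : G -> G).
Hypothesis s_antimorph : forall g h : G, s (g * h)%g = (s h * s g)%g.
Hypothesis mul_star_or_commute :
  forall x y : G, (x * y = s x * s y)%g \/ commute x y.

Lemma commute_mull_cancel (x y : G) : commute x (x * y)%g -> commute x y.
Proof. by rewrite /commute -mulgA => /mulgI. Qed.

Lemma commute_mulr_cancel (x y : G) : commute (x * y)%g y -> commute x y.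
Proof. by rewrite /commute mulgA => /mulIg. Qed.

Lemma commute_sqr (g h : G) : commute (g * g)%g h.
Proof.
have [cgh | ncgh] := eqVneq (g * h)%g (h * g)%g.
  by apply/commute_sym/commuteM; rewrite /commute -cgh.
have gh_star : (g * h = s g * s h)%g.
  by case: (mul_star_or_commute g h) => // cgh; rewrite cgh eqxx in ncgh.
have gh_hsg : (g * h = h * s g)%g.
  case: (mul_star_or_commute g (g * h)%g) => [| /commute_mull_cancel cgh].
    by rewrite s_antimorph (mulgA (s g)) -gh_star -mulgA => /mulgI.
  by rewrite cgh eqxx in ncgh.
case: (mul_star_or_commute (h * g)%g g) => [| /commute_mulr_cancel chg].
  rewrite s_antimorph -gh_star -(mulgA g) -gh_hsg mulgA => hgg.
  by rewrite /commute -hgg mulgA.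
by rewrite chg eqxx in ncgh.
Qed.

End SquaresCentral.

Theorem lemma4 (F : fieldType) (G : groupType) (s : G -> G) :
  infinite_field F ->
  (2%:R : F)%R != 0%R ->
  group_involution s ->
  galg_normal F s ->
  forall g h : G, (g * g * h)%g = (h * (g * g))%g.
Proof.
move=> _ two_neq0 [s_antimorph s_invol] normalFG g h.
apply: (commute_sqr s_antimorph) => x y.
have := galg_normal_mul_star normalFG two_neq0 x (s y).
by rewrite s_invol; case; [left | right].
Qed.
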